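(* For every integer $n\ge 4$ and every integer $t$ with $2\le t\le n-3$, $\mathrm{wdim}_{2n-2t}(K_n\times K_n)=n^2-tn$.
   Context: $K_n\times K_n$ is the direct product of two complete graphs on $n$ vertices: vertex set $[n]\times[n]$ with $[n]=\{1,\dots,n\}$, and $(i,j)$ adjacent to $(i',j')$ iff $i\ne i'$ and $j\ne j'$. For a connected graph $G$ with distance $d_G$, vertices $x,y,z$ and $S\subseteq V(G)$, let $\Delta_z(x,y)=|d_G(x,z)-d_G(y,z)|$ and $\Delta_S(x,y)=\sum_{z\in S}\Delta_z(x,y)$. A set $S$ is a weak $k$-resolving set if $\Delta_S(x,y)\ge k$ for all distinct $x,y\in V(G)$, and $\mathrm{wdim}_k(G)$ is the minimum cardinality of a weak $k$-resolving set of $G$. *)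

From mathcomp Require Import all_boot.
Set Implicit Arguments. Unset Strict Implicit. Unset Printing Implicit Defensive.

Section Graphs.
Variable T : finType.
Variable e : rel T.

Fixpoint ball (k : nat) (x : T) : {set T} :=
  match k with
  | 0 => [set x]
  | k'.+1 => ball k' x :|: [set y | [exists z in ball k' x, e z y]]
  end.

(* graph distance: least k with y within k steps of x; in a connected
   graph it is < #|T|, so the default #|T| is never used there *)
Definition gdist (x y : T) : nat :=
  \big[minn/#|T|]_(k < #|T| | y \in ball k x) k.

Definition connected_graph : Prop := forall x y : T, y \in ball #|T| x.

Definition absdiff (a b : nat) : nat := (a - b) + (b - a).

Definition Delta (S : {set T}) (x y : T) : nat :=
  \sum_(z in S) absdiff (gdist x z) (gdist y z).

Definition weak_k_resolving (k : nat) (S : {set T}) : bool :=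
  [forall x, forall y, (x != y) ==> (k <= Delta S x y)].

(* minimum cardinality of a weak k-resolving set (#|T|.+1 if none exists) *)
Definition wdim (k : nat) : nat :=
  \big[minn/#|T|.+1]_(S : {set T} | weak_k_resolving k S) #|S|.
End Graphs.

Definition KnKn_adj (n : nat) : rel ('I_n * 'I_n)%type :=
  fun u v => (u.1 != v.1) && (u.2 != v.2).
Arguments ball {T} e k x.
Arguments gdist {T} e x y.
Arguments connected_graph {T} e.
Arguments Delta {T} e S x y.
Arguments weak_k_resolving {T} e k S.
Arguments wdim {T} e k.
Arguments KnKn_adj : clear implicits.

From mathcomp Require Import all_boot all_order zify.
Import Order.TTheory.

Set Implicit Arguments.
Unset Strict Implicit.
Unset Printing Implicit Defensive.

(* In K_n x K_n (n >= 3) two vertices are at distance 0, 1 or 2 according as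
   they agree in both, in no, or in exactly one coordinate.  Hence for two
   vertices in a common row, Delta_S counts the points of S in their two
   columns plus the two vertices themselves; symmetrically for a common
   column; and for any other pair it is the sum of the four line counts minus
   a correction of at most 6.  The cyclic band {(a, b) | (a + b) mod n >= t}
   meets every line in n - t points, so it is weak (2n - 2t)-resolving as soon
   as n - t >= 3.  Conversely, the complement B of a weak (2n - 2t)-resolving
   set satisfies m_j + m_j' + B_ij + B_ij' <= 2t + 2 for all i and j != j',
   where m_j is the number of holes in column j, and the same for rows; a case
   analysis on a column with more than t holes shows that B has at most tn
   holes. *)

Lemma bigminn_le_cond (I : finType) (x : nat) (P : pred I) (F : I -> nat) (j : I) :
  P j -> \big[minn/x]_(i | P i) F i <= F j.
Proof. by move=> Pj; have := bigmin_le_cond x F Pj; rewrite minEnat leEnat. Qed.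

Lemma leq_bigminn (I : finType) (x m : nat) (P : pred I) (F : I -> nat) :
  m <= x -> (forall i, P i -> m <= F i) -> m <= \big[minn/x]_(i | P i) F i.
Proof.
by move=> mx mF; have := le_bigmin (T := nat) (index_enum I) mx mF; rewrite minEnat leEnat.
Qed.

Section GraphInvariants.
Variables (T : finType) (e : rel T).

Lemma gdist_eq_of_ball (x : T) (f : T -> nat) :
  (forall k, ball e k x = [set y | f y <= k]) ->
  forall y, f y < #|T| -> gdist e x y = f y.
Proof.
move=> ballE y fy; apply/eqP; rewrite eqn_leq; apply/andP; split.
  by apply: (@bigminn_le_cond _ _ _ _ (Ordinal fy)); rewrite ballE inE.
by apply: leq_bigminn => [|k]; [exact: ltnW | rewrite ballE inE].
Qed.

Lemma wdim_eq (k : nat) (S : {set T}) :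
  weak_k_resolving e k S ->
  (forall S', weak_k_resolving e k S' -> #|S| <= #|S'|) -> wdim e k = #|S|.
Proof.
move=> resS minS; apply/eqP; rewrite eqn_leq bigminn_le_cond //=.
by apply: leq_bigminn => //; apply: leqW; apply: max_card.
Qed.

End GraphInvariants.

Lemma exists_ord_neq2 (n : nat) (a b : 'I_n) :
  2 < n -> exists c : 'I_n, (c != a) && (c != b).
Proof.
move=> n3; have /subsetPn [c _] : ~~ ([set: 'I_n] \subset [set a; b]).
  apply: contraTN n3; rewrite -leqNgt => /subset_leq_card.
  by rewrite cardsT card_ord cards2; case: (a != b); lia.
by rewrite !inE negb_or => cab; exists c.
Qed.

Lemma sum_ord_eq (n : nat) (j : 'I_n) : \sum_(k < n) (k == j : nat) = 1.
Proof. by rewrite (bigD1 j) //= eqxx big1 // => k /negbTE ->. Qed.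

Lemma sum_bool_negb (n : nat) (b : 'I_n -> bool) :
  \sum_(i < n) (b i : nat) + \sum_(i < n) (~~ b i : nat) = n.
Proof.
rewrite -big_split /= (eq_bigr (fun=> 1)) => [|i _]; last by case: (b i).
by rewrite sum1_card card_ord.
Qed.

Lemma sum_in_set_eq (T : finType) (S : {set T}) (w : T) :
  \sum_(z in S) (z == w : nat) = (w \in S).
Proof.
rewrite big_mkcond (bigD1 w) //= eqxx big1 ?addn0; first by case: (w \in S).
by move=> z /negbTE ->; case: (z \in S).
Qed.

Section KnKnDistance.
Variable n : nat.
Notation V := ('I_n * 'I_n)%type.

Definition KnKn_dist (u v : V) : nat :=
  if u.1 == v.1 then (if u.2 == v.2 then 0 else 2) else (if u.2 == v.2 then 2 else 1).

Lemma KnKn_dist_le2 u v : KnKn_dist u v <= 2.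
Proof. by rewrite /KnKn_dist; case: (_ == _); case: (_ == _). Qed.

Lemma KnKn_dist_eq0 u v : (KnKn_dist u v == 0) = (u == v).
Proof.
by case: u v => [a b] [c d]; rewrite /KnKn_dist xpair_eqE; case: (a == c); case: (b == d).
Qed.

Lemma KnKn_dist_eq1 u v : (KnKn_dist u v == 1) = KnKn_adj n u v.
Proof.
by case: u v => [a b] [c d]; rewrite /KnKn_dist /KnKn_adj /=; case: (a == c); case: (b == d).
Qed.

Lemma KnKn_dist_adj_le u v w :
  KnKn_adj n v w -> KnKn_dist u w <= (KnKn_dist u v).+1.
Proof.
have [/eqP|duv _] := posnP (KnKn_dist u v).
  by rewrite KnKn_dist_eq0 => /eqP -> /=; rewrite -KnKn_dist_eq1 => /eqP ->.
by apply: leq_trans (KnKn_dist_le2 u w) _; rewrite ltnS.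
Qed.

Lemma dist_diff_same_row (i j j' : 'I_n) (z : V) : j != j' ->
  absdiff (KnKn_dist (i, j) z) (KnKn_dist (i, j') z)
  = (z.2 == j) + (z.2 == j') + (z == (i, j)) + (z == (i, j')).
Proof.
case: z => a b jj'; rewrite /KnKn_dist /absdiff /= !xpair_eqE
  ![_ == a]eq_sym ![_ == b]eq_sym.
by case: (a == i) => /=; case: (b =P j) => [->|_]; rewrite ?eqxx ?(negbTE jj') /=;
  case: (b == j').
Qed.

Lemma dist_diff_same_col (i i' j : 'I_n) (z : V) : i != i' ->
  absdiff (KnKn_dist (i, j) z) (KnKn_dist (i', j) z)
  = (z.1 == i) + (z.1 == i') + (z == (i, j)) + (z == (i', j)).
Proof.
case: z => a b ii'; rewrite /KnKn_dist /absdiff /= !xpair_eqE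
  ![_ == a]eq_sym ![_ == b]eq_sym.
by case: (b == j) => /=; case: (a =P i) => [->|_]; rewrite ?eqxx ?(negbTE ii') /=;
  case: (a == i').
Qed.

Lemma dist_diff_diag (i i' j j' : 'I_n) (z : V) : i != i' -> j != j' ->
  absdiff (KnKn_dist (i, j) z) (KnKn_dist (i', j') z)
    + ((z == (i, j)) + (z == (i', j'))) + 2 * ((z == (i, j')) + (z == (i', j)))
  = (z.1 == i) + (z.1 == i') + (z.2 == j) + (z.2 == j').
Proof.
case: z => a b ii' jj'; rewrite /KnKn_dist /absdiff /= !xpair_eqE
  ![_ == a]eq_sym ![_ == b]eq_sym.
case: (a =P i) => [->|_]; case: (b =P j) => [->|_];
  rewrite ?eqxx ?(negbTE ii') ?(negbTE jj') /=;
  try case: (a == i'); try case: (b == j'); by [].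
Qed.

Hypothesis n3 : 2 < n.

Lemma KnKn_common_neighbour (u v : V) : exists w, KnKn_adj n u w && KnKn_adj n w v.
Proof.
case: u v => [a b] [c d].
have [a' /andP [a'a a'c]] := exists_ord_neq2 a c n3.
have [b' /andP [b'b b'd]] := exists_ord_neq2 b d n3.
exists (a', b'); rewrite /KnKn_adj /= ![_ == a']eq_sym ![_ == b']eq_sym.
by rewrite a'a a'c b'b b'd.
Qed.

Lemma ball_KnKn k (x : V) : ball (KnKn_adj n) k x = [set y | KnKn_dist x y <= k].
Proof.
elim: k => [|k IH] /=; apply/setP => y; rewrite !inE.
  by rewrite leqn0 KnKn_dist_eq0 eq_sym.
rewrite IH inE; apply/idP/idP.
  case/orP => [/leqW //|/existsP [z /andP []]].
  by rewrite inE => xz /(KnKn_dist_adj_le x) /leq_trans; apply.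
rewrite leq_eqVlt ltnS orbC => /orP [-> //|/eqP dxy]; apply/orP; right; apply/existsP.
case: k {IH} dxy => [|[|k]] dxy.
- by exists x; rewrite inE /KnKn_dist !eqxx /= -KnKn_dist_eq1 dxy.
- have [w /andP [xw wy]] := KnKn_common_neighbour x y.
  by exists w; rewrite inE wy andbT; move: xw; rewrite -KnKn_dist_eq1 => /eqP ->.
- by have := KnKn_dist_le2 x y; rewrite dxy.
Qed.

Lemma gdist_KnKn (x y : V) : gdist (KnKn_adj n) x y = KnKn_dist x y.
Proof.
apply: (gdist_eq_of_ball (f := KnKn_dist x)) => [k|]; first exact: ball_KnKn.
by rewrite card_prod card_ord; have := KnKn_dist_le2 x y; nia.
Qed.

End KnKnDistance.

Section BoolMatrices.
Variable n : nat.
Notation V := ('I_n * 'I_n)%type.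

Definition col_sum (A : 'I_n -> 'I_n -> bool) (j : 'I_n) : nat := \sum_(i < n) A i j.
Definition row_sum (A : 'I_n -> 'I_n -> bool) (i : 'I_n) : nat := \sum_(j < n) A i j.
Definition set_mx (S : {set V}) (a b : 'I_n) : bool := (a, b) \in S.

Lemma sum_row_sum A : \sum_(i < n) row_sum A i = \sum_(j < n) col_sum A j.
Proof. exact: exchange_big. Qed.

Lemma sum_in_set_pair (S : {set V}) (F : V -> nat) :
  \sum_(z in S) F z = \sum_a \sum_b (set_mx S a b * F (a, b)).
Proof.
rewrite pair_big /= big_mkcond; apply: eq_bigr => -[a b] _ /=.
by rewrite /set_mx; case: ((a, b) \in S); rewrite ?mul1n ?mul0n.
Qed.

Lemma sum_in_set_eq_snd (S : {set V}) j :
  \sum_(z in S) (z.2 == j : nat) = col_sum (set_mx S) j.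
Proof.
rewrite sum_in_set_pair; apply: eq_bigr => a _.
by rewrite (bigD1 j) //= eqxx muln1 big1 ?addn0 // => b /negbTE ->; rewrite muln0.
Qed.

Lemma sum_in_set_eq_fst (S : {set V}) i :
  \sum_(z in S) (z.1 == i : nat) = row_sum (set_mx S) i.
Proof.
rewrite sum_in_set_pair (bigD1 i) //= [X in _ + X]big1 ?addn0.
  by apply: eq_bigr => b _; rewrite eqxx muln1.
by move=> a /negbTE ia; apply: big1 => b _; rewrite /= ia muln0.
Qed.

Lemma card_set_mx (S : {set V}) : #|S| = \sum_(i < n) row_sum (set_mx S) i.
Proof.
rewrite -sum1_card sum_in_set_pair; apply: eq_bigr => a _.
by apply: eq_bigr => b _; rewrite muln1.
Qed.

End BoolMatrices.

Section KnKnDelta.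
Variable n : nat.
Hypothesis n3 : 2 < n.
Variable S : {set 'I_n * 'I_n}.
Notation M := (set_mx S).
Notation Delta_S := (Delta (KnKn_adj n) S).

Lemma Delta_KnKn x y :
  Delta_S x y = \sum_(z in S) absdiff (KnKn_dist x z) (KnKn_dist y z).
Proof. by apply: eq_bigr => z _; rewrite !gdist_KnKn. Qed.

Lemma Delta_same_row (i j j' : 'I_n) : j != j' ->
  Delta_S (i, j) (i, j') = col_sum M j + col_sum M j' + M i j + M i j'.
Proof.
move=> jj'; rewrite Delta_KnKn.
under eq_bigr => z _ do rewrite (dist_diff_same_row i z jj').
by rewrite !big_split /= !sum_in_set_eq_snd !sum_in_set_eq.
Qed.

Lemma Delta_same_col (i i' j : 'I_n) : i != i' ->
  Delta_S (i, j) (i', j) = row_sum M i + row_sum M i' + M i j + M i' j.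
Proof.
move=> ii'; rewrite Delta_KnKn.
under eq_bigr => z _ do rewrite (dist_diff_same_col j z ii').
by rewrite !big_split /= !sum_in_set_eq_fst !sum_in_set_eq.
Qed.

Lemma Delta_diag (i i' j j' : 'I_n) : i != i' -> j != j' ->
  Delta_S (i, j) (i', j') + (M i j + M i' j') + 2 * (M i j' + M i' j)
  = row_sum M i + row_sum M i' + col_sum M j + col_sum M j'.
Proof.
move=> ii' jj'; rewrite Delta_KnKn.
rewrite -!sum_in_set_eq_fst -!sum_in_set_eq_snd -!big_split /=.
rewrite -(eq_bigr _ (fun z _ => dist_diff_diag z ii' jj')).
by rewrite !big_split /= big1_eq !sum_in_set_eq addn0 mul2n -addnn.
Qed.

End KnKnDelta.

Section PairBoundedColumns.
Variables (n t : nat) (B : 'I_n -> 'I_n -> bool).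
Hypothesis n3 : 2 < n.
Hypothesis col_pairs : forall i j j', j != j' ->
  col_sum B j + col_sum B j' + B i j + B i j' <= 2 * t + 2.

Lemma col_sum_pair_le j j' : j != j' -> 0 < col_sum B j ->
  col_sum B j + col_sum B j' <= 2 * t + 1.
Proof.
move=> jj'; rewrite lt0n sum_nat_eq0 => /forallPn [i /=].
by case: (boolP (B i j)) => // Bij _; have := col_pairs i jj'; rewrite Bij; lia.
Qed.

Lemma sum_col_sum_le_or_heavy :
  \sum_(j < n) col_sum B j <= t * n \/
  exists2 js, col_sum B js = t.+1 & forall j, j != js -> col_sum B j <= t.
Proof.
have [light|] := boolP [forall j, col_sum B j <= t].
  left; apply: (@leq_trans (\sum_(j < n) t)).
    by apply: leq_sum => j _; exact: (forallP light).
  by rewrite sum_nat_const card_ord mulnC.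
case/forallPn => js; rewrite -ltnNge => heavy.
have partner j : j != js -> col_sum B js + col_sum B j <= 2 * t + 1.
  by move=> jjs; apply: col_sum_pair_le; rewrite 1?eq_sym //; lia.
have [cjs|cjs] := eqVneq (col_sum B js) t.+1.
  by right; exists js => // j /partner; lia.
have [j1 /andP [j1js _]] := exists_ord_neq2 js js n3.
have := partner j1 j1js; left.
have : \sum_(j < n) col_sum B j <= col_sum B js + n.-1 * (2 * t + 1 - col_sum B js).
  rewrite (bigD1 js) //= leq_add2l.
  apply: leq_trans (_ : \sum_(j < n | j != js) (2 * t + 1 - col_sum B js) <= _).
    by apply: leq_sum => j /partner; lia.
  by rewrite sum_nat_const cardC1 card_ord.
nia.
Qed.

End PairBoundedColumns.

Section PairBoundedMatrix.
Variables (n t : nat) (B : 'I_n -> 'I_n -> bool).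
Hypotheses (n3 : 2 < n) (t2 : 1 < t).
Hypothesis col_pairs : forall i j j', j != j' ->
  col_sum B j + col_sum B j' + B i j + B i j' <= 2 * t + 2.
Hypothesis row_pairs : forall j i i', i != i' ->
  row_sum B i + row_sum B i' + B i j + B i' j <= 2 * t + 2.

Section HeavyColumn.
Variable js : 'I_n.
Hypothesis heavy_js : col_sum B js = t.+1.
Hypothesis light_cols : forall j, j != js -> col_sum B j <= t.

Lemma sum_col_sum_le_shared_row i j : j != js -> B i js -> B i j ->
  \sum_(k < n) col_sum B k <= t * n.
Proof.
move=> jjs Bijs Bij.
have jsj : js != j by rewrite eq_sym.
have cj : col_sum B j < t by have := col_pairs i jsj; rewrite Bijs Bij heavy_js; lia.
have : \sum_k (col_sum B k + (k == j)) <= \sum_k (t + (k == js)).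
  apply: leq_sum => k _; have [->|kjs] := eqVneq k js.
    by rewrite (negbTE jsj) heavy_js; lia.
  by have [->|_] := eqVneq k j; [lia | have := light_cols kjs; lia].
by rewrite !big_split /= !sum_ord_eq sum_nat_const card_ord mulnC; lia.
Qed.

Lemma sum_col_sum_le_isolated ist :
  row_sum B ist = t.+1 -> (forall i, i != ist -> row_sum B i <= t) ->
  (forall i j, j != js -> B i js -> ~~ B i j) -> \sum_(k < n) col_sum B k <= t * n.
Proof.
move=> heavy_ist light_rows isolated.
have single i : B i js -> row_sum B i = 1.
  move=> Bijs; rewrite /row_sum (bigD1 js) //= Bijs big1 // => j jjs.
  by rewrite (negbTE (isolated _ _ jjs Bijs)).
have Bist : ~~ B ist js by apply/negP => /single; rewrite heavy_ist; lia.
(* Each of the t + 1 rows meeting column js holds a single hole, hence has slack t - 1. *)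
have : \sum_i (row_sum B i + (t - 1) * B i js) <= \sum_i (t + (i == ist)).
  apply: leq_sum => i _; have [->|iist] := eqVneq i ist.
    by rewrite (negbTE Bist) heavy_ist; lia.
  by case: (boolP (B i js)) => [/single -> | _]; [lia | have := light_rows i iist; lia].
rewrite !big_split /= -big_distrr /= sum_row_sum -/(col_sum B js) heavy_js.
rewrite sum_nat_const card_ord sum_ord_eq.
have : 3 <= (t - 1) * t.+1 by nia.
set s := \sum_(j < n) col_sum B j; lia.
Qed.

End HeavyColumn.

Lemma sum_col_sum_le : \sum_(j < n) col_sum B j <= t * n.
Proof.
have [//|[js heavy_js light_cols]] := sum_col_sum_le_or_heavy n3 col_pairs.
have [|[ist heavy_ist light_rows]] :=
  sum_col_sum_le_or_heavy (B := fun i j => B j i) n3 row_pairs.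
  by rewrite sum_row_sum.
have [shared|isolated] := boolP [exists i, exists j, [&& j != js, B i js & B i j]].
  case/existsP: shared => i /existsP [j /and3P [jjs Bijs Bij]].
  exact: (sum_col_sum_le_shared_row heavy_js light_cols jjs Bijs Bij).
apply: (sum_col_sum_le_isolated heavy_js heavy_ist light_rows) => i j jjs Bijs.
move/existsPn/(_ i)/existsPn/(_ j): isolated.
by rewrite jjs Bijs.
Qed.

End PairBoundedMatrix.

Lemma sum_ord_leq (t N : nat) : \sum_(k < N) (t <= k : nat) = N - t.
Proof.
elim: N => [|N IH]; first by rewrite big_ord0.
by rewrite big_ord_recr /= IH; case: (leqP t N) => /=; lia.
Qed.

Lemma sum_ord_addn_mod (n : nat) (F : nat -> nat) (i : 'I_n) :
  \sum_(b < n) F ((i + b) %% n) = \sum_(b < n) F b.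
Proof.
have n0 : 0 < n by case: n i => [[]|].
pose rot (b : 'I_n) := Ordinal (ltn_pmod (i + b) n0).
have rot_inj : injective rot.
  move=> b1 b2 /(congr1 val) /= /eqP; rewrite eqn_modDl !modn_small // => /eqP.
  exact: ord_inj.
by rewrite [RHS](reindex_inj rot_inj).
Qed.

Section Band.
Variables n t : nat.
Notation V := ('I_n * 'I_n)%type.

Definition band : {set V} := [set z : V | t <= (z.1 + z.2) %% n].

Lemma row_sum_band i : row_sum (set_mx band) i = n - t.
Proof.
rewrite -(sum_ord_leq t n) -(sum_ord_addn_mod (leq t) i).
by apply: eq_bigr => b _; rewrite /set_mx inE.
Qed.

Lemma col_sum_band j : col_sum (set_mx band) j = n - t.
Proof.
rewrite -(sum_ord_leq t n) -(sum_ord_addn_mod (leq t) j).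
by apply: eq_bigr => a _; rewrite /set_mx inE addnC.
Qed.

Lemma card_band : #|band| = n * (n - t).
Proof.
rewrite card_set_mx (eq_bigr (fun=> n - t)) => [|i _]; last exact: row_sum_band.
by rewrite sum_nat_const card_ord.
Qed.

Lemma band_weak_resolving :
  t + 3 <= n -> weak_k_resolving (KnKn_adj n) (2 * n - 2 * t) band.
Proof.
move=> tn; have n3 : 2 < n by lia.
apply/forallP => -[i j]; apply/forallP => -[i' j']; apply/implyP.
rewrite xpair_eqE negb_and.
have [<-|ii'] := eqVneq i i'; have [<-|jj'] := eqVneq j j' => //= _.
- by rewrite Delta_same_row // !col_sum_band; lia.
- by rewrite Delta_same_col // !row_sum_band; lia.
have := Delta_diag n3 band ii' jj'; rewrite !row_sum_band !col_sum_band.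
by case: (set_mx _ i j); case: (set_mx _ i' j'); case: (set_mx _ i j');
  case: (set_mx _ i' j) => /=; lia.
Qed.

End Band.

Lemma weak_resolving_card_ge (n t : nat) (S : {set 'I_n * 'I_n}) :
  2 < n -> 1 < t -> weak_k_resolving (KnKn_adj n) (2 * n - 2 * t) S ->
  n * n - t * n <= #|S|.
Proof.
move=> n3 t2 /forallP resS.
have sep x y : x != y -> 2 * n - 2 * t <= Delta (KnKn_adj n) S x y.
  by have /forallP/(_ y)/implyP := resS x.
pose B a b := ~~ set_mx S a b.
have col_compl j : col_sum (set_mx S) j + col_sum B j = n := sum_bool_negb _.
have row_compl i : row_sum (set_mx S) i + row_sum B i = n := sum_bool_negb _.
have col_pairs i j j' : j != j' ->
    col_sum B j + col_sum B j' + B i j + B i j' <= 2 * t + 2.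
  move=> jj'; have := sep (i, j) (i, j'); rewrite xpair_eqE eqxx jj' Delta_same_row //.
  have := col_compl j; have := col_compl j'; rewrite /B.
  by case: (set_mx S i j); case: (set_mx S i j') => /=; lia.
have row_pairs j i i' : i != i' ->
    row_sum B i + row_sum B i' + B i j + B i' j <= 2 * t + 2.
  move=> ii'; have := sep (i, j) (i', j).
  rewrite xpair_eqE eqxx andbT ii' Delta_same_col //.
  have := row_compl i; have := row_compl i'; rewrite /B.
  by case: (set_mx S i j); case: (set_mx S i' j) => /=; lia.
have total : \sum_(i < n) row_sum (set_mx S) i + \sum_(i < n) row_sum B i = n * n.
  by rewrite -big_split /= (eq_bigr (fun=> n)) // sum_nat_const card_ord.
have := sum_col_sum_le n3 t2 col_pairs row_pairs.
by move: total; rewrite card_set_mx (sum_row_sum B); lia.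
Qed.

Theorem mainTheorem9 (n t : nat) :
  4 <= n -> 2 <= t -> t <= n - 3 ->
  wdim (KnKn_adj n) (2 * n - 2 * t) = n ^ 2 - t * n.
Proof.
move=> _ t2 tn; have n3 : 2 < n by lia.
have card_band_eq : #|band n t| = n ^ 2 - t * n by rewrite card_band mulnBr mulnn mulnC.
rewrite -card_band_eq; apply: wdim_eq; first by apply: band_weak_resolving; lia.
by move=> S /(weak_resolving_card_ge n3 t2); rewrite card_band_eq mulnn.
Qed.
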